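(* Let $\mathcal{H}=\operatorname{coh}\mathbb{X}$ for a weighted projective line of weight type $(p_1,\ldots,p_t)$, and let $y\in K_0(\mathcal{H})$. The linear form $\lambda=\langle y,-\rangle:K_0(\mathcal{H})\to\mathbb{Z}$ satisfies $\lambda\circ(1+\Phi)=0$ if and only if $\Phi y=-y$. In this case $\operatorname{rk}(y)=0$ and $\deg(y)=0$.
   Context: $k$ is algebraically closed; $\mathcal{H}=\operatorname{coh}\mathbb{X}$ is hereditary abelian with Serre duality and AR translation $\tau$. The Euler form on $K_0(\mathcal{H})$ is $\langle[X],[Y]\rangle=\dim_k\operatorname{Hom}(X,Y)-\dim_k\operatorname{Ext}^1(X,Y)$; it is nondegenerate with Gram matrix of determinant $\pm1$. The Coxeter transformation $\Phi$ is the automorphism of $K_0(\mathcal{H})$ with $\Phi[X]=[\tau X]$. $L$ is the structure sheaf, $a=[L]$, $S_0$ a simple sheaf in a homogeneous (rank one) tube, $s_0=[S_0]$. The rank is $\operatorname{rk}(x)=\langle x,s_0\rangle$ and the degree is $\deg(x)=\sum_{j=0}^{p-1}\langle\Phi^ja,\,x-\operatorname{rk}(x)a\rangle$ with $p=\operatorname{lcm}(p_1,\ldots,p_t)$. *)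

(* Basis of K_0 (Geigle--Lenzing): it is free abelian on
     a      = [L]            (structure sheaf)
     s0     = [S_0]          (simple sheaf at an ordinary point)
     S(i,j) = [S_{i,j}]      for 1 <= i <= t, 1 <= j <= p_i - 1,
   where S_{i,j} (j mod p_i) is the simple sheaf concentrated at the i-th
   exceptional point with Hom(L(j x_i), S_{i,j}) <> 0, so that
   tau S_{i,j} = S_{i,j-1} and [S_{i,0}] = s0 - sum_{j=1}^{p_i-1} [S_{i,j}].
   In Rocq, S(i,j) is indexed by (i : 'I_t, j' : 'I_(p_i - 1)) with j = j'+1. *)
From HB Require Import structures.
From mathcomp Require Import all_boot all_order all_algebra.
Set Implicit Arguments. Unset Strict Implicit. Unset Printing Implicit Defensive.
Import Order.TTheory GRing.Theory Num.Theory.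
Local Open Scope ring_scope.

Definition Idx (ps : seq nat) : finType :=
  option (option {i : 'I_(size ps) & 'I_((nth 1%N ps i).-1)}).

Notation K0 ps := {ffun Idx ps -> int}.

Definition idx_a {ps} : Idx ps := None.
Definition idx_s0 {ps} : Idx ps := Some None.

(* Gram matrix of the Euler form <u,v> = dim Hom - dim Ext^1 on basis elements,
   computed from Serre duality Ext^1(X,Y) = D Hom(Y, tau X):
     <a,a> = 1, <a,s0> = 1, <s0,a> = -1, <s0,s0> = 0,
     <a,S(i,j)> = 0, <S(i,j),a> = -[j = 1], <s0,S> = <S,s0> = 0,
     <S(i,j),S(k,l)> = [i = k] ([j = l] - [l = j - 1]). *)
Definition gram {ps} (u v : Idx ps) : int :=
  match u, v with
  | None, None => 1
  | None, Some None => 1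
  | None, Some (Some _) => 0
  | Some None, None => -1
  | Some None, Some _ => 0
  | Some (Some _), Some None => 0
  | Some (Some x), None => - ((val (tagged x) == 0%N)%:Z)
  | Some (Some x), Some (Some y) =>
      ((val (tag x) == val (tag y)) : int) *
      (((val (tagged x) == val (tagged y)) : int)
       - ((val (tagged y)).+1 == val (tagged x) : int))
  end.

(* coefficient of basis vector v in Phi(basis vector u):
     Phi a      = [L(omega)] = a - 2 s0 + sum_{i,j>=1} S(i,j)
     Phi s0     = s0
     Phi S(i,1) = [S_{i,0}] = s0 - sum_{j>=1} S(i,j)
     Phi S(i,j) = S(i,j-1)   for j >= 2 *)
Definition phiB {ps} (u v : Idx ps) : int :=
  match u, v with
  | None, None => 1
  | None, Some None => -2
  | None, Some (Some _) => 1
  | Some None, Some None => 1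
  | Some None, _ => 0
  | Some (Some x), None => 0
  | Some (Some x), Some None => ((val (tagged x) == 0%N) : int)
  | Some (Some x), Some (Some y) =>
      if val (tagged x) == 0%N then - ((val (tag x) == val (tag y)) : int)
      else ((val (tag x) == val (tag y)) && ((val (tagged y)).+1 == val (tagged x)) : int)
  end.

Definition euler {ps} (x y : K0 ps) : int :=
  \sum_(u : Idx ps) \sum_(v : Idx ps) x u * y v * gram u v.

Definition Phi {ps} (x : K0 ps) : K0 ps :=
  [ffun v => \sum_(u : Idx ps) x u * phiB u v].

Definition aK {ps} : K0 ps := [ffun v => ((v == idx_a) : int)].
Definition s0K {ps} : K0 ps := [ffun v => ((v == idx_s0) : int)].

Definition rk {ps} (x : K0 ps) : int := euler x s0K.
Definition pl (ps : seq nat) : nat := \big[lcmn/1%N]_(q <- ps) q.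
Definition deg {ps} (x : K0 ps) : int :=
  \sum_(j < pl ps) euler (iter j Phi aK) (x - [ffun v => rk x * aK v]).

From HB Require Import structures.
From mathcomp Require Import all_boot all_order all_algebra.
From mathcomp Require Import ring.
Set Implicit Arguments. Unset Strict Implicit. Unset Printing Implicit Defensive.
Import GRing.Theory Num.Theory.
Local Open Scope ring_scope.

(* Serre duality reads <x, Phi y> = - <y, x> on K_0.  It makes Phi an isometry
   and gives <y, x + Phi x> = - <x, y + Phi y>, so by nondegeneracy of the
   Euler form, lambda o (1 + Phi) = 0 exactly when y + Phi y = 0.
   If Phi y = - y, then rk y = <y, s0> is the coefficient of a in y, which Phi
   fixes, so it vanishes; and <Phi^j a, y> = (-1)^j <a, y>, so deg y is 0 when
   p is even and <a, y> when p is odd.  In the odd case every p_i is odd, and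
   Phi y = - y says that the coefficients c_1, ..., c_(p_i - 1) of the S_(i,j)
   satisfy c_(j+1) + c_j = c_1 (with c_(p_i) = 0); they alternate between c_1
   and 0, so c_1 = 0.  The s0-coordinate of Phi y = - y then kills the
   coefficient of s0, and <a, y> is the sum of the coefficients of a and s0. *)

Lemma sum_signr (R : pzRingType) n (c : R) :
  \sum_(j < n) (-1) ^+ j * c = if odd n then c else 0.
Proof.
elim: n => [|n IHn]; first by rewrite big_ord0.
rewrite big_ord_recr IHn /= -signr_odd.
by case: (odd n); rewrite /= ?expr0 ?expr1 ?mulN1r ?mul1r ?subrr ?add0r.
Qed.

Lemma adjacent_sum_constE (V : zmodType) (f : nat -> V) q :
  (forall n, (n < q)%N -> f n.+1 + f n = f 0%N) ->
  forall n, (n <= q)%N -> f n = if odd n then 0 else f 0%N.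
Proof.
move=> rec; elim=> [|n IHn] le_nq //=.
rewrite -[f n.+1](addrK (f n)) rec // IHn; last exact: ltnW.
by case: (odd n); rewrite /= ?subr0 ?subrr.
Qed.

Lemma dvdn_nth_biglcm (s : seq nat) i :
  (i < size s)%N -> (nth 1 s i %| \big[lcmn/1%N]_(q <- s) q)%N.
Proof. by move=> lt_is; rewrite (big_nth 1%N) big_mkord (biglcmn_sup (Ordinal lt_is)). Qed.

Section SerreDuality.

Variables (V : zmodType) (R : pzRingType) (form : V -> V -> R) (phi : V -> V).
Hypothesis formDr : forall x y z, form x (y + z) = form x y + form x z.
Hypothesis form_phir : forall x y, form x (phi y) = - form y x.

Lemma form0r x : form x 0 = 0.
Proof. by apply: (addrI (form x 0)); rewrite -formDr !addr0. Qed.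

Lemma formNr x y : form x (- y) = - form x y.
Proof. by apply: (addrI (form x y)); rewrite -formDr !subrr form0r. Qed.

Lemma form_phi_phi x y : form (phi x) (phi y) = form x y.
Proof. by rewrite form_phir form_phir opprK. Qed.

Lemma form_addr_phi x y : form y (x + phi x) = - form x (y + phi y).
Proof. by rewrite !formDr !form_phir opprD opprK addrC. Qed.

Lemma form_iter_phi_anti x y j : phi y = - y ->
  form (iter j phi x) y = (-1) ^+ j * form x y.
Proof.
move=> phiy; elim: j => [|j IHj]; first by rewrite mul1r.
by rewrite exprS mulN1r mulNr -IHj /= -[y in LHS]opprK -phiy formNr form_phi_phi.
Qed.

Hypothesis form_nondegr : forall z, (forall x, form x z = 0) -> z = 0.

Lemma form_addr_phi_eq0P y : (forall x, form y (x + phi x) = 0) <-> phi y = - y.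
Proof.
split=> [vanish | phiy x]; last by rewrite form_addr_phi phiy subrr form0r oppr0.
apply/eqP; rewrite -addr_eq0 addrC; apply/eqP/form_nondegr => x.
by rewrite -[LHS]opprK -form_addr_phi vanish oppr0.
Qed.

End SerreDuality.

Lemma big_option (R : nmodType) (T : finType) (F : option T -> R) :
  \sum_(u : option T) F u = F None + \sum_(t : T) F (Some t).
Proof.
rewrite (bigD1 None) //=; congr (_ + _).
rewrite (reindex_omap Some id) /=; last by case.
by apply: eq_bigl => t; rewrite eqxx.
Qed.

Lemma sum_delta (I : finType) (i : I) (F : I -> int) :
  \sum_j ((j == i) : int) * F j = F i.
Proof.
rewrite (bigD1 i) //= eqxx mul1r big1 ?addr0 // => j /negbTE->.
by rewrite mul0r.
Qed.

Lemma sum_delta_ord n (i : 'I_n) (F : 'I_n -> int) :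
  \sum_j ((val j == val i) : int) * F j = F i.
Proof. by under eq_bigr do rewrite val_eqE; exact: sum_delta. Qed.

Section K0Basis.

Variable ps : seq nat.

Definition exc_len (k : 'I_(size ps)) : nat := (nth 1%N ps k).-1.

Definition idx_S k (j : 'I_(exc_len k)) : Idx ps :=
  Some (Some (Tagged (fun i => 'I_(exc_len i)) j)).

Variant Idx_spec : Idx ps -> Type :=
  | IdxA : Idx_spec idx_a
  | IdxS0 : Idx_spec idx_s0
  | IdxS k (j : 'I_(exc_len k)) : Idx_spec (idx_S j).

Lemma IdxP u : Idx_spec u.
Proof. by case: u => [[[k j]|]|]; [exact: (IdxS j) | constructor..]. Qed.

Lemma sum_Idx (R : nmodType) (F : Idx ps -> R) :
  \sum_u F u = F idx_a + F idx_s0 + \sum_k \sum_(j : 'I_(exc_len k)) F (idx_S j).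
Proof.
rewrite !big_option addrA (sig_big_dep _ _ (fun k j => F (idx_S j))) /=.
by congr (_ + _); apply: eq_bigr => -[k j].
Qed.

(* [coordS x k n] is the coefficient of S(k, n+1), padded with 0 for
   n >= p_k - 1; the padding makes the formulas for [Phi] and the Euler form
   below hold uniformly up to the last exceptional simple. *)
Definition coordS (x : K0 ps) k n : int :=
  if (insub n : option 'I_(exc_len k)) is Some j then x (idx_S j) else 0.

Lemma coordS_idx (x : K0 ps) k (j : 'I_(exc_len k)) : coordS x k j = x (idx_S j).
Proof. by rewrite /coordS valK. Qed.

Lemma coordS_out (x : K0 ps) k n : (exc_len k <= n)%N -> coordS x k n = 0.
Proof. by move=> le_kn; rewrite /coordS insubF // ltnNge le_kn. Qed.

Lemma sum_coordS (x : K0 ps) k (c : nat) :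
  \sum_(j : 'I_(exc_len k)) x (idx_S j) * ((val j == c) : int) = coordS x k c.
Proof.
case: (ltnP c (exc_len k)) => [lt_ck | le_kc]; last first.
  rewrite coordS_out // big1 // => j _.
  by rewrite (ltn_eqF (leq_trans (ltn_ord j) le_kc)) mulr0.
rewrite (bigD1 (Ordinal lt_ck)) //= eqxx mulr1 (coordS_idx x (Ordinal lt_ck)).
rewrite big1 ?addr0 // => j.
by rewrite -val_eqE /= => /negbTE->; rewrite mulr0.
Qed.

Lemma sum_coordS_succ (x : K0 ps) k (c : nat) :
  \sum_(j : 'I_(exc_len k)) x (idx_S j) * (((val j).+1 == c) : int) =
  if c is n.+1 then coordS x k n else 0.
Proof.
case: c => [|n]; last exact: sum_coordS.
by rewrite big1 // => j _; rewrite mulr0.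
Qed.

Definition basisK (u : Idx ps) : K0 ps := [ffun v => ((v == u) : int)].

Lemma sum_basisK u (F : Idx ps -> int) : \sum_v basisK u v * F v = F u.
Proof. by under eq_bigr do rewrite ffunE; exact: sum_delta. Qed.

Lemma eulerEl u (z : K0 ps) : euler (basisK u) z = \sum_v z v * gram u v.
Proof.
rewrite -(sum_basisK u (fun u' => \sum_v z v * gram u' v)); apply: eq_bigr => u' _.
by rewrite mulr_sumr; apply: eq_bigr => v _; rewrite mulrA.
Qed.

Lemma eulerEr (y : K0 ps) v : euler y (basisK v) = \sum_u y u * gram u v.
Proof.
rewrite /euler; apply: eq_bigr => u _.
rewrite -(sum_basisK v (fun v' => y u * gram u v')).
by apply: eq_bigr => v' _; rewrite mulrCA mulrA.
Qed.

Lemma euler_expandl (x z : K0 ps) : euler x z = \sum_u x u * euler (basisK u) z.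
Proof.
apply: eq_bigr => u _; rewrite eulerEl mulr_sumr.
by apply: eq_bigr => v _; rewrite mulrA.
Qed.

Lemma euler_expandr (y x : K0 ps) : euler y x = \sum_v x v * euler y (basisK v).
Proof.
rewrite {1}/euler exchange_big; apply: eq_bigr => v _; rewrite eulerEr mulr_sumr.
by apply: eq_bigr => u _; rewrite mulrCA mulrA.
Qed.

Lemma euler_al (z : K0 ps) : euler (basisK idx_a) z = z idx_a + z idx_s0.
Proof.
rewrite eulerEl sum_Idx /= !mulr1 big1 ?addr0 // => k _.
by rewrite big1 // => j _; rewrite mulr0.
Qed.

Lemma euler_s0l (z : K0 ps) : euler (basisK idx_s0) z = - z idx_a.
Proof.
rewrite eulerEl sum_Idx /= mulrN1 mulr0 addr0 big1 ?addr0 // => k _.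
by rewrite big1 // => j _; rewrite mulr0.
Qed.

Lemma euler_Sl k (m : 'I_(exc_len k)) (z : K0 ps) :
  euler (basisK (idx_S m)) z =
  coordS z k m - (if (m : nat) is n.+1 then coordS z k n else z idx_a).
Proof.
rewrite eulerEl sum_Idx /= mulr0 addr0.
under eq_bigr => k' _ do
  rewrite (eq_bigr _ (fun j _ => mulrCA _ _ _)) -mulr_sumr (eq_sym (val k)).
rewrite sum_delta_ord.
under eq_bigr => j _ do rewrite mulrBr eq_sym.
rewrite sumrB sum_coordS sum_coordS_succ.
by case: (m : nat) => [|n] /=; ring.
Qed.

Lemma euler_ar (y : K0 ps) :
  euler y (basisK idx_a) = y idx_a - y idx_s0 - \sum_k coordS y k 0.
Proof.
rewrite eulerEr sum_Idx /= mulr1 mulrN1 -sumrN; congr (_ + _).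
apply: eq_bigr => k _; rewrite -sum_coordS -sumrN.
by apply: eq_bigr => j _; rewrite mulrN.
Qed.

Lemma euler_s0r (y : K0 ps) : euler y (basisK idx_s0) = y idx_a.
Proof.
rewrite eulerEr sum_Idx /= mulr1 mulr0 addr0 big1 ?addr0 // => k _.
by rewrite big1 // => j _; rewrite mulr0.
Qed.

Lemma euler_Sr k (m : 'I_(exc_len k)) (y : K0 ps) :
  euler y (basisK (idx_S m)) = coordS y k m - coordS y k m.+1.
Proof.
rewrite eulerEr sum_Idx /= !mulr0 !addr0 add0r.
under eq_bigr => k' _ do
  rewrite (eq_bigr _ (fun j _ => mulrCA _ _ _)) -mulr_sumr.
rewrite sum_delta_ord.
under eq_bigr => j _ do rewrite mulrBr (eq_sym m.+1).
by rewrite sumrB !sum_coordS.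
Qed.

Lemma Phi_a (y : K0 ps) : Phi y idx_a = y idx_a.
Proof.
rewrite ffunE sum_Idx /= mulr1 mulr0 addr0 big1 ?addr0 // => k _.
by rewrite big1 // => j _; rewrite mulr0.
Qed.

Lemma Phi_s0 (y : K0 ps) :
  Phi y idx_s0 = y idx_s0 - y idx_a *+ 2 + \sum_k coordS y k 0.
Proof.
rewrite ffunE sum_Idx /= mulr1.
under eq_bigr => k _ do rewrite sum_coordS.
ring.
Qed.

Lemma Phi_S k (m : 'I_(exc_len k)) (y : K0 ps) :
  Phi y (idx_S m) = y idx_a - coordS y k 0 + coordS y k m.+1.
Proof.
rewrite ffunE sum_Idx /= mulr1 mulr0 addr0 -addrA; congr (_ + _).
rewrite -(sum_delta_ord k (fun k' => - coordS y k' 0 + coordS y k' m.+1)).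
apply: eq_bigr => k' _; rewrite -!sum_coordS -sumrN -big_split mulr_sumr /=.
apply: eq_bigr => j _; case: eqP => [-> | _] /=; first by ring.
by rewrite -mulnb PoszM (eq_sym m.+1); ring.
Qed.

Lemma coordS_Phi k n (y : K0 ps) : (n < exc_len k)%N ->
  coordS (Phi y) k n = y idx_a - coordS y k 0 + coordS y k n.+1.
Proof. by move=> lt_nk; rewrite (coordS_idx _ (Ordinal lt_nk)) Phi_S. Qed.

Lemma euler_bas_Phi u (y : K0 ps) : euler (basisK u) (Phi y) = - euler y (basisK u).
Proof.
case: (IdxP u) => [||k m].
- by rewrite euler_al euler_ar Phi_a Phi_s0; ring.
- by rewrite euler_s0l euler_s0r Phi_a.
rewrite euler_Sl euler_Sr (coordS_idx (Phi y)) Phi_S.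
case E: (m : nat) => [|n]; first by rewrite Phi_a; ring.
have lt_nk : (n < exc_len k)%N by apply: ltnW; rewrite -E ltn_ord.
by rewrite coordS_Phi //; ring.
Qed.

Lemma euler_addr (x y z : K0 ps) : euler x (y + z) = euler x y + euler x z.
Proof.
rewrite !(euler_expandr x) -big_split; apply: eq_bigr => v _.
by rewrite ffunE mulrDl.
Qed.

Lemma euler_Phir (x y : K0 ps) : euler x (Phi y) = - euler y x.
Proof.
rewrite euler_expandl euler_expandr -sumrN; apply: eq_bigr => u _.
by rewrite euler_bas_Phi mulrN.
Qed.

Lemma euler_nondegr (z : K0 ps) : (forall x, euler x z = 0) -> z = 0.
Proof.
move=> z_rad.
have za : z idx_a = 0 by apply/eqP; rewrite -oppr_eq0 -euler_s0l z_rad.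
have zs : z idx_s0 = 0 by rewrite -[LHS]add0r -za -euler_al z_rad.
have zS k n : (n < exc_len k)%N -> coordS z k n = 0.
  elim: n => [|n IHn] lt_nk; have := z_rad (basisK (idx_S (Ordinal lt_nk))).
    by rewrite euler_Sl /= za subr0.
  by rewrite euler_Sl /= IHn ?subr0 // ltnW.
apply/ffunP => u; rewrite ffunE; case: (IdxP u) => // k j.
by rewrite -coordS_idx zS.
Qed.

Lemma Phi_anti_a (y : K0 ps) : Phi y = - y -> y idx_a = 0.
Proof.
by move=> Py; have := Phi_a y; rewrite Py ffunE => /eqP; rewrite eqNr => /eqP.
Qed.

Lemma coordS_Phi_anti (y : K0 ps) k :
  Phi y = - y -> ~~ odd (exc_len k) -> coordS y k 0 = 0.
Proof.
move=> Py even_k.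
have rec n : (n < exc_len k)%N -> coordS y k n.+1 + coordS y k n = coordS y k 0.
  move=> lt_nk; have := Phi_S (Ordinal lt_nk) y.
  rewrite Py ffunE (Phi_anti_a Py) -(coordS_idx y (Ordinal lt_nk)) /= => Sn.
  by rewrite -[coordS y k n]opprK Sn; ring.
have := adjacent_sum_constE rec (leqnn (exc_len k)).
by rewrite coordS_out // (negbTE even_k) => /esym.
Qed.

Lemma euler_a_Phi_anti (y : K0 ps) :
  Phi y = - y -> (forall k, ~~ odd (exc_len k)) -> euler (basisK idx_a) y = 0.
Proof.
move=> Py even; rewrite euler_al (Phi_anti_a Py) add0r.
have := Phi_s0 y; rewrite Py ffunE (Phi_anti_a Py) big1 => [|k _]; last first.
  exact: coordS_Phi_anti.
rewrite mul0rn subr0 addr0 => /eqP; rewrite eq_sym -subr_eq0 opprK -mulr2n.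
by rewrite mulrn_eq0 => /eqP.
Qed.

Lemma odd_pl_exc_len k : odd (pl ps) -> ~~ odd (exc_len k).
Proof.
move/(dvdn_odd (dvdn_nth_biglcm (ltn_ord k))); rewrite /exc_len.
by case: (nth 1%N ps k).
Qed.

End K0Basis.

Theorem lemma3p8 (ps : seq nat) (hps : all (fun q => 0 < q)%N ps) (y : K0 ps) :
  ((forall x : K0 ps, euler y (x + Phi x) = 0) <-> Phi y = - y) /\
  (Phi y = - y -> rk y = 0 /\ deg y = 0).
Proof.
split.
  exact: (form_addr_phi_eq0P (@euler_addr ps) (@euler_Phir ps) (@euler_nondegr ps)).
move=> Py; have rk0 : rk y = 0 by rewrite /rk euler_s0r (Phi_anti_a Py).
split=> //; rewrite /deg.
have -> : y - [ffun v => rk y * aK v] = y.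
  by apply/ffunP => v; rewrite !ffunE rk0 mul0r subr0.
under eq_bigr do rewrite (form_iter_phi_anti (@euler_addr ps) (@euler_Phir ps) _ _ Py).
rewrite sum_signr; case: ifP => // /odd_pl_exc_len even.
exact: euler_a_Phi_anti.
Qed.
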